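(* Let $\mathcal{B}$ be the Borel $\sigma$-algebra of $[0,1]$ and let $\mathcal{D}=\{f^{-1}(B):B\in\mathcal{B}\}$, where $f\colon[0,1]\to[0,1]$ is constructed as described in the context. Then the $\sigma$-algebra $$\big((\mathcal{D}\vee\mathcal{B})\otimes\mathcal{B}\big)\cap\big((\mathcal{D}\vee\mathcal{B})\otimes\mathcal{D}\big)$$ on $[0,1]^2$ is not of the form $\mathcal{A}_0\otimes\mathcal{E}$ for any $\sigma$-algebras $\mathcal{A}_0,\mathcal{E}$ on $[0,1]$.
   Context: Construction of $f$: let $\omega_{\mathfrak{c}}$ be the first ordinal of cardinality $\mathfrak{c}$ (the continuum), and let $(M_\alpha)_{1\le\alpha<\omega_{\mathfrak{c}}}$ be an enumeration of all uncountable Borel subsets of $[0,1]$ with uncountable complement. By transfinite recursion choose for each $\alpha<\omega_{\mathfrak{c}}$ three distinct points $x_\alpha,y_\alpha\in M_\alpha$, $z_\alpha\in[0,1]\setminus M_\alpha$ with $\{x_\alpha,y_\alpha,z_\alpha\}\cap\bigcup_{\beta<\alpha}\{x_\beta,y_\beta,z_\beta\}=\emptyset$. Define $f$ by $f(x_\alpha)=z_\alpha$, $f(z_\alpha)=x_\alpha$ for every $\alpha$, and $f(t)=t$ for all other $t$ (in particular $f(y_\alpha)=y_\alpha$). For $\sigma$-algebras $\mathcal{F},\mathcal{G}$ on a set, $\mathcal{F}\vee\mathcal{G}$ is the smallest $\sigma$-algebra containing $\mathcal{F}\cup\mathcal{G}$; $\otimes$ denotes the product $\sigma$-algebra (generated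 by measurable rectangles). *)

From HB Require Import structures.
From mathcomp Require Import all_boot all_order all_algebra.
From mathcomp Require Import all_classical all_reals all_analysis.
Set Implicit Arguments. Unset Strict Implicit. Unset Printing Implicit Defensive.
Import Order.TTheory GRing.Theory Num.Theory numFieldTopology.Exports numFieldNormedType.Exports.
Local Open Scope classical_set_scope.
Local Open Scope ring_scope.

Definition I01 (R : realType) : Type := {x : R | 0 <= x <= 1}.

Definition borelR (R : realType) : set (set R) := <<s [set U : set R | open U] >>.

Definition borel01 (R : realType) : set (set (I01 R)) :=
  [set A | exists B : set R, borelR B /\ A = (@sval R _) @^-1` B].

Definition sjoin (T : Type) (F G : set (set T)) : set (set T) := <<s F `|` G >>.

Definition sprod (T1 T2 : Type) (F : set (set T1)) (G : set (set T2))
  : set (set (T1 * T2)) :=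
  <<s [set A `*` B | A in F & B in G] >>.

Definition spreim (T U : Type) (f : T -> U) (G : set (set U)) : set (set T) :=
  [set f @^-1` B | B in G].

Definition bad_set (R : realType) (M : set (I01 R)) : Prop :=
  @borel01 R M /\ ~ countable M /\ ~ countable (~` M).

(* f arises from the construction in the paper: an enumeration (M_a)_{a in I}
   of all uncountable Borel sets with uncountable complement, points
   x_a, y_a in M_a, z_a notin M_a, pairwise distinct, triples disjoint across
   indices, f swapping x_a and z_a and fixing every other point. *)
Definition constructed (R : realType) (f : I01 R -> I01 R) : Prop :=
  exists (I : Type) (M : I -> set (I01 R)) (x y z : I -> I01 R),
    [/\ (forall a, bad_set (M a)),
        (forall A, bad_set A -> exists a, M a = A),
        (forall a, [/\ M a (x a), M a (y a), ~ M a (z a) & x a <> y a]),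
        (forall a b, a <> b ->
           [set x a; y a; z a] `&` [set x b; y b; z b] = set0) &
        [/\ (forall a, f (x a) = z a),
            (forall a, f (z a) = x a) &
            (forall t, (forall a, t <> x a /\ t <> z a) -> f t = t)]].

From HB Require Import structures.
From mathcomp Require Import all_boot all_order all_algebra.
From mathcomp Require Import all_classical all_reals all_analysis.
Import Order.TTheory GRing.Theory Num.Theory.
Local Open Scope classical_set_scope.

(* Every set e = f⁻¹(N) in B ∩ D is countable or cocountable.  Otherwise
   either e \ N is uncountable with uncountable complement, so it is some M_α
   and contains the fixed point y_α of f, which is absurd because a fixed
   point of f in f⁻¹(N) lies in N; or e ∩ N is, so it contains x_α but not
   z_α = f(x_α), which is absurd because e ∩ N is invariant under the
   involution f.
   If the σ-algebra were A₀ ⊗ E, the sections of [0,1] × e would give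
   E ⊆ B ∩ D; then, off a countable set of second coordinates, membership of
   (x, y) in a set of A₀ ⊗ E does not depend on y.  The diagonal lies in both
   products, because t ↦ t and t ↦ f(t) are injective real functions that are
   B- resp. D-measurable, yet it has no such form since [0,1] is
   uncountable. *)

Section sigma_algebra_closure.
Context {T : Type} {S : set (set T)} (sS : sigma_algebra setT S).

Lemma sigma_algebra_setC {A} : S A -> S (~` A).
Proof. by rewrite -setTD; case: sS => _ + _; apply. Qed.

Lemma sigma_algebra_setT : S setT.
Proof. by rewrite -setC0; apply: sigma_algebra_setC; case: sS. Qed.

Lemma sigma_algebra_bigcupT {F : (set T)^nat} :
  (forall n, S (F n)) -> S (\bigcup_n F n).
Proof. by case: sS => _ _; apply. Qed.

Lemma sigma_algebra_setU {A B} : S A -> S B -> S (A `|` B).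
Proof.
move=> SA SB; rewrite -bigcup2E; apply: sigma_algebra_bigcupT => -[|[|n]] //=.
by case: sS.
Qed.

Lemma sigma_algebra_setI {A B} : S A -> S B -> S (A `&` B).
Proof.
move=> SA SB; rewrite -[A `&` B]setCK setCI.
by apply/sigma_algebra_setC/sigma_algebra_setU; apply: sigma_algebra_setC.
Qed.

Lemma sigma_algebra_setD {A B} : S A -> S B -> S (A `\` B).
Proof.
by move=> SA SB; apply: sigma_algebra_setI => //; apply: sigma_algebra_setC.
Qed.

End sigma_algebra_closure.

Lemma sub_sjoinl {T : Type} (F G : set (set T)) : F `<=` sjoin F G.
Proof. by move=> A FA; apply: sub_sigma_algebra; left. Qed.

Lemma sub_sjoinr {T : Type} (F G : set (set T)) : G `<=` sjoin F G.
Proof. by move=> A GA; apply: sub_sigma_algebra; right. Qed.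

Lemma spreim_sigma_algebra {T U : Type} (f : T -> U) {G : set (set U)} :
  sigma_algebra setT G -> sigma_algebra setT (spreim f G).
Proof.
move=> /(sigma_algebra_preimage setT f).
suff -> : preimage_set_system setT f G = spreim f G by [].
by rewrite /preimage_set_system; under eq_imagel do rewrite setTI.
Qed.

Lemma borel01E (R : realType) : @borel01 R = spreim (@sval R _) (@borelR R).
Proof.
by apply/seteqP; split=> [A [B [BB ->]]|_ [B BB <-]]; [exists B|exists B].
Qed.

Lemma borel01_sigma_algebra (R : realType) : sigma_algebra setT (@borel01 R).
Proof. by rewrite borel01E; apply/spreim_sigma_algebra/smallest_sigma_algebra. Qed.

Lemma subset_countable {T : Type} {A B : set T} :
  A `<=` B -> countable B -> countable A.
Proof. by move=> AB; apply/sub_countable/subset_card_le. Qed.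

Lemma countableU {T : Type} {A B : set T} :
  countable A -> countable B -> countable (A `|` B).
Proof.
move=> cA cB; rewrite -bigcup2E.
by apply: bigcup_countable => [|[|[|n]] _] //=; exact: countable0.
Qed.

Definition countable_or_cocountable {T : Type} (A : set T) : Prop :=
  countable A \/ countable (~` A).

Section product_sections.
Context {T1 T2 : Type}.
Implicit Types (F : set (set T1)) (G E : set (set T2)) (W : set (T1 * T2)).

Lemma sprod_xsection {F G W} x :
  sigma_algebra setT G -> sprod F G W -> G [set y | W (x, y)].
Proof.
move=> sG SW; move: W SW x.
apply: (@smallest_sub _ _ _ [set W | forall x, G [set y | W (x, y)]])
  => [|_ [A _ [B GB <-]] x].
  split=> [x|A SA x|Ws SWs x] /=.
  - by rewrite [X in G X](_ : _ = set0) //; case: sG.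
  - rewrite [X in G X](_ : _ = ~` [set y | A (x, y)]).
      exact: sigma_algebra_setC.
    by apply/seteqP; split=> y /=; [case|].
  - by apply: (sigma_algebra_bigcupT sG) => n; exact: SWs.
have [Ax|nAx] := pselect (A x).
  by rewrite [X in G X](_ : _ = B) //; apply/seteqP; split=> y /=; [case|].
by rewrite [X in G X](_ : _ = set0); [case: sG|apply/seteqP; split=> y // []].
Qed.

Lemma sprod_subset_snd {F G A0 E} (x0 : T1) :
  A0 setT -> sigma_algebra setT G -> sprod A0 E `<=` sprod F G -> E `<=` G.
Proof.
move=> A0T sG A0EFG e Ee.
have : sprod F G (setT `*` e).
  by apply: A0EFG; apply: sub_sigma_algebra; exists setT => //; exists e.
move=> /(sprod_xsection x0 sG); rewrite [X in G X](_ : _ = e) //.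
by apply/seteqP; split=> y // [].
Qed.

Definition cocountably_constant_snd W := exists Q : set T2, countable Q /\
  forall x y1 y2, ~ Q y1 -> ~ Q y2 -> W (x, y1) -> W (x, y2).

Lemma sprod_cocountably_constant_snd {F E W} :
  E `<=` countable_or_cocountable -> sprod F E W -> cocountably_constant_snd W.
Proof.
move=> Ecc; move: W.
apply: (@smallest_sub _ _ _ cocountably_constant_snd) => [|_ [A _ [e Ee <-]]].
  split=> [|W [Q [cQ WQ]]|Ws SWs].
  - by exists set0; split; [exact: countable0|move=> x y1 y2 _ _].
  - exists Q; split => // x y1 y2 Qy1 Qy2 [_ nWy1]; split => // Wy2.
    exact/nWy1/(WQ x y2).
  - have /choice[Q QWs] := SWs.
    exists (\bigcup_n Q n); split.
      by apply: bigcup_countable => // n _; exact: (QWs n).1.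
    move=> x y1 y2 Qy1 Qy2 [n _ Wny1]; exists n => //.
    by apply: (QWs n).2 Wny1 => Qny; [apply: Qy1|apply: Qy2]; exists n.
case: (Ecc e Ee) => [ce|cCe].
  by exists e; split=> // x y1 y2 /[swap] _ + [].
exists (~` e); split => // x y1 y2 _ eNy2 [Ax _]; split => //.
exact: contra_notP eNy2.
Qed.

End product_sections.

Definition diagonal {T : Type} : set (T * T) := [set p | p.1 = p.2].

Lemma diagonal_not_cocountably_constant_snd (T : Type) :
  ~ countable [set: T] -> ~ cocountably_constant_snd (@diagonal T).
Proof.
move=> uT [Q [cQ diagQ]].
have avoid (A : set T) : countable A -> exists2 y, ~ Q y & ~ A y.
  move=> cA; apply: contra_notP uT => noy.
  apply: (subset_countable _ (countableU cQ cA)) => y _.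
  by apply: contrapT => /not_orP[nQy nAy]; apply: noy; exists y.
have [y1 nQy1 _] := avoid set0 (countable0 _).
have [y2 nQy2 y21] := avoid [set y1] (countable1 y1).
exact/y21/esym/(diagQ y1 y1 y2).
Qed.

Section real_cuts.
Context {R : realType} {T : Type}.

Definition cuts_in (F : set (set T)) (g : T -> R) :=
  forall r, F [set t | (g t < r)%R] /\ F [set t | (r < g t)%R].

Lemma cuts_in_subset {F G : set (set T)} {g : T -> R} :
  F `<=` G -> cuts_in F g -> cuts_in G g.
Proof. by move=> FG gF r; have [lo up] := gF r; split; apply: FG. Qed.

Lemma cuts_in_spreim {F : set (set T)} (f : T -> T) {g : T -> R} :
  cuts_in F g -> cuts_in (spreim f F) (g \o f).
Proof.
move=> gF r; have [lo up] := gF r.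
by split; [exists [set t | (g t < r)%R]|exists [set t | (r < g t)%R]].
Qed.

Lemma sprod_diagonal {F1 F2 : set (set T)} {g : T -> R} :
  injective g -> cuts_in F1 g -> cuts_in F2 g -> sprod F1 F2 diagonal.
Proof.
move=> ig g1 g2.
(* [q] enumerates the rationals, which separate [g a] from [g b] when [a <> b]. *)
pose q n : R := if @pickle_inv rat n is Some q then ratr q else 0%R.
pose lo n := [set t | (g t < q n)%R]; pose up n := [set t | (q n < g t)%R].
have -> : diagonal = ~` \bigcup_n ((lo n `*` up n) `|` (up n `*` lo n)).
  rewrite /diagonal; apply/seteqP; split=> [[a b] /= -> [n _]|[a b] /= offdiag].
    by rewrite /lo /up /= => -[] [/lt_trans/[apply]]; rewrite ltxx.
  apply: contrapT => nab; have /eqP : g a <> g b by move/ig.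
  rewrite neq_lt => /orP[] ab;
    have [r] := rat_in_itvoo ab; rewrite in_itv /= => /andP[r1 r2];
    apply: offdiag; exists (pickle r) => //; rewrite /lo /up /q pickleK_inv;
    by [left|right].
have sS : sigma_algebra setT (sprod F1 F2) by exact: smallest_sigma_algebra.
apply: (sigma_algebra_setC sS); apply: (sigma_algebra_bigcupT sS) => n.
by apply: (sigma_algebra_setU sS); apply: sub_sigma_algebra;
  [exists (lo n); [exact: (g1 _).1|exists (up n) => //; exact: (g2 _).2]
  |exists (up n); [exact: (g1 _).2|exists (lo n) => //; exact: (g2 _).1]].
Qed.

End real_cuts.

Lemma sval_I01_inj (R : realType) : injective (sval : I01 R -> R).
Proof. by move=> a b; apply: eq_sig_hprop => r p q; exact: Prop_irrelevance. Qed.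

Lemma borel01_cuts (R : realType) : cuts_in (@borel01 R) sval.
Proof.
move=> r; split.
- exists [set x | (x < r)%R]; split => //.
  by apply: sub_sigma_algebra; exact: open_lt.
- exists [set x | (r < x)%R]; split => //.
  by apply: sub_sigma_algebra; exact: open_gt.
Qed.

Lemma I01_uncountable (R : realType) : ~ countable [set: I01 R].
Proof.
move=> cI; have : countable (`]0%R, 1%R[%classic : set R).
  apply: (subset_countable _ (sub_countable (card_image_le sval setT) cI)).
  move=> r; rewrite /= in_itv /= => /andP[r0 r1].
  by exists (exist _ r (introT andP (conj (ltW r0) (ltW r1)))).
move/(countable_lebesgue_measure0 (R:=R)).
rewrite lebesgue_measure_itv /= lte_fin ltr01 oppr0 adde0.
by move=> /eqP; rewrite eqe oner_eq0.
Qed.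

Section involution_preimages.
Context {T : Type} {S : set (set T)} (sS : sigma_algebra setT S) {f : T -> T}.
Hypothesis f_involutive : involutive f.
Hypothesis fixpoint_in : forall M, S M /\ ~ countable M /\ ~ countable (~` M) ->
  exists2 y, M y & f y = y.
Hypothesis moved_out_of : forall M, S M /\ ~ countable M /\ ~ countable (~` M) ->
  exists2 x, M x & ~ M (f x).

Lemma setI_spreim_countable_or_cocountable :
  S `&` spreim f S `<=` countable_or_cocountable.
Proof.
move=> A [Se [N SN NA]]; subst A; set e := f @^-1` N in Se *.
apply: contrapT => /not_orP[ue uCe].
have uCe_sub X : ~ countable (~` (e `&` X)).
  by move=> cC; apply/uCe/(subset_countable _ cC) => t + [].
have ceN : countable (e `\` N).
  apply: contrapT => ueN.
  have [y [ey nNy] fy] := fixpoint_in (e `\` N) (conj (sigma_algebra_setD sS Se SN)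
    (conj ueN (uCe_sub (~` N)))).
  by apply: nNy; rewrite -fy.
have ueN : ~ countable (e `&` N).
  move=> ceN'; apply/ue/(subset_countable _ (countableU ceN' ceN)) => t et.
  by have [Nt|nNt] := pselect (N t); [left|right].
have [x [ex Nx] nefx] := moved_out_of (e `&` N) (conj (sigma_algebra_setI sS Se SN)
  (conj ueN (uCe_sub N))).
by apply: nefx; split; rewrite // /e /preimage /= f_involutive.
Qed.

End involution_preimages.

Section constructed_map.
Context {R : realType} {f : I01 R -> I01 R} (hf : constructed f).

Lemma constructed_involutive : involutive f.
Proof.
move: hf => [I [M [x [y [z [_ _ _ _ [fx fz fother]]]]]]] t.
have [[a [->|->]]|notxz] := pselect (exists a, t = x a \/ t = z a).
- by rewrite fx fz.
- by rewrite fz fx.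
have ft : f t = t.
  by apply: fother => a; split=> ta; apply: notxz; exists a; [left|right].
by rewrite !ft.
Qed.

Lemma constructed_fixpoint_in M : bad_set M -> exists2 t, M t & f t = t.
Proof.
move: hf => [I [Ms [x [y [z [_ enum xyz disj [_ _ fother]]]]]]] badM.
have [c <-] := enum M badM; have [_ Myc nMzc xy] := xyz c.
exists (y c) => //; apply: fother => a.
have [->|ac] := pselect (a = c).
  by split=> [/esym|yz] //; apply: nMzc; rewrite -yz.
have := disj _ _ ac; rewrite -subset0 => /(_ (y c)) yc_not_in_both.
have yc_in_c : [set x c; y c; z c] (y c) by left; right.
by split=> ya; apply: yc_not_in_both; split=> //; rewrite ya; [left; left|right].
Qed.

Lemma constructed_moved_out_of M : bad_set M -> exists2 t, M t & ~ M (f t).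
Proof.
move: hf => [I [Ms [x [y [z [_ enum xyz _ [fx _ _]]]]]]] badM.
have [c <-] := enum M badM.
by have [Mxc _ nMzc _] := xyz c; exists (x c); rewrite ?fx.
Qed.

Lemma borel01_spreim_countable_or_cocountable :
  @borel01 R `&` spreim f (@borel01 R) `<=` countable_or_cocountable.
Proof.
apply: (setI_spreim_countable_or_cocountable (borel01_sigma_algebra R)
  constructed_involutive) => M; [exact: constructed_fixpoint_in|
  exact: constructed_moved_out_of].
Qed.

End constructed_map.

Theorem corollary2p5 (R : realType) (f : I01 R -> I01 R) :
  constructed f ->
  let B := @borel01 R in
  let D := spreim f B in
  ~ exists (A0 E : set (set (I01 R))),
      [/\ sigma_algebra setT A0, sigma_algebra setT E &
          sprod (sjoin D B) B `&` sprod (sjoin D B) D = sprod A0 E].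
Proof.
move=> hf B D [A0 [E [sA0 _ prodE]]].
have sB : sigma_algebra setT B := borel01_sigma_algebra R.
have sD : sigma_algebra setT D := spreim_sigma_algebra f sB.
have t0 : I01 R by exists 0%R; rewrite lexx ler01.
have [EB ED] : E `<=` B /\ E `<=` D.
  split; apply: (sprod_subset_snd (F := sjoin D B) t0 (sigma_algebra_setT sA0));
    rewrite // -prodE; [exact: subIsetl|exact: subIsetr].
have Ecc : E `<=` countable_or_cocountable.
  move=> e Ee; apply: (borel01_spreim_countable_or_cocountable hf).
  by split; [exact: EB|exact: ED].
have cuts_B := borel01_cuts R.
have cuts_D : cuts_in D (sval \o f) := cuts_in_spreim f cuts_B.
have diagE : sprod A0 E diagonal.
  rewrite -prodE; split.
  - apply: sprod_diagonal (cuts_in_subset (sub_sjoinr _ _) cuts_B) cuts_B.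
    exact: sval_I01_inj.
  - apply: sprod_diagonal (cuts_in_subset (sub_sjoinl _ _) cuts_D) cuts_D.
    by move=> a b /sval_I01_inj /(can_inj (constructed_involutive hf)).
exact: diagonal_not_cocountably_constant_snd (I01_uncountable R)
  (sprod_cocountably_constant_snd Ecc diagE).
Qed.
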